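(* Let $\varphi:\mathbb{R}^n\to[0,\infty]$ be a lower semicontinuous convex function with $\varphi(0)=0$, and let $\varphi^\circ(x)=\sup_{y\in\mathbb{R}^n}\frac{\langle x,y\rangle-1}{\varphi(y)}$. Then for every $t>0$, \[ \underline{K}_{1/t}(\varphi)^\circ\subseteq \underline{K}_t(\varphi^\circ)\subseteq 2\,\underline{K}_{1/t}(\varphi)^\circ . \]
   Context: For a function $\psi$ and $s\in\mathbb{R}$, $\underline{K}_s(\psi)=\{x\in\mathbb{R}^n:\psi(x)\le s\}$. For a set $K\subseteq\mathbb{R}^n$, its polar is $K^\circ=\{y\in\mathbb{R}^n:\ \langle x,y\rangle\le 1\ \text{for all } x\in K\}$. In the definition of $\varphi^\circ$ the usual conventions of the $\mathcal{A}$-transform are used: $a/0=+\infty$ if $a>0$, $a/0=0$ if $a\le 0$, and $a/\infty=0$. *)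

From HB Require Import structures.
From mathcomp Require Import all_boot all_order all_algebra.
From mathcomp Require Import all_classical all_reals all_analysis.
Set Implicit Arguments. Unset Strict Implicit. Unset Printing Implicit Defensive.
Import Order.TTheory GRing.Theory Num.Theory.
Import numFieldNormedType.Exports.
Local Open Scope classical_set_scope.
Local Open Scope ring_scope.

Definition dotp (R : realType) (n : nat) (x y : 'rV[R]_n) : R :=
  \sum_(i < n) x ord0 i * y ord0 i.

(* convexity of an extended-real valued function (intended for [0,+oo]-valued) *)
Definition econvex (R : realType) (n : nat) (f : 'rV[R]_n -> \bar R) : Prop :=
  forall (x y : 'rV[R]_n) (l : R), 0 < l -> l < 1 ->
    (f (l *: x + (1 - l) *: y)%R <= l%:E * f x + (1 - l)%:E * f y)%E.

(* a / b with the A-transform conventions: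
   a/0 = +oo if a > 0, a/0 = 0 if a <= 0, a/oo = 0 *)
Definition adiv (R : realType) (a : R) (b : \bar R) : \bar R :=
  match b with
  | r%:E => if r == 0 then (if 0 < a then +oo%E else 0%E) else (a / r)%:E
  | _ => 0%E
  end.

Definition polarfun (R : realType) (n : nat) (phi : 'rV[R]_n -> \bar R)
  (x : 'rV[R]_n) : \bar R :=
  ereal_sup [set adiv (dotp x y - 1) (phi y) | y in [set: 'rV[R]_n]].

Definition sublevel (R : realType) (n : nat) (psi : 'rV[R]_n -> \bar R) (s : R)
  : set 'rV[R]_n := [set x | (psi x <= s%:E)%E].

Definition polarset (R : realType) (n : nat) (K : set 'rV[R]_n) : set 'rV[R]_n :=
  [set y | forall x, K x -> dotp x y <= 1].

Definition dilate (R : realType) (n : nat) (c : R) (K : set 'rV[R]_n) : set 'rV[R]_n :=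
  [set c *: x | x in K].

From HB Require Import structures.
From mathcomp Require Import all_boot all_order all_algebra.
From mathcomp Require Import all_classical all_reals all_analysis.
From mathcomp Require Import lra.
Import Order.TTheory GRing.Theory Num.Theory.
Import numFieldNormedType.Exports.
Local Open Scope classical_set_scope.
Local Open Scope ring_scope.

(* For nonnegative [phi], [phi^o(x) <= t] says [<x,y> - 1 <= t phi(y)] for all
   [y].  The second inclusion then only needs [phi(z) <= 1/t], i.e.
   [<x,z> <= 2].  For the first, convexity and [phi(0) = 0] give
   [phi(l z) <= l phi(z)], so a point [z] with [phi(z) = r > 1/t] rescaled by
   [l = 1/(t r)] lands in the sublevel set, whence [<y,z> <= t r]. *)

Section Polarity.
Local Set Implicit Arguments.
Local Unset Strict Implicit.
Variables (R : realType) (n : nat).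
Implicit Types (phi : 'rV[R]_n -> \bar R) (x y z : 'rV[R]_n).

Lemma dotpC x y : dotp x y = dotp y x.
Proof. by apply: eq_bigr => i _; rewrite mulrC. Qed.

Lemma dotpZl (a : R) x y : dotp (a *: x) y = a * dotp x y.
Proof. by rewrite /dotp mulr_sumr; apply: eq_bigr => i _; rewrite mxE mulrA. Qed.

Lemma dotpZr (a : R) x y : dotp x (a *: y) = a * dotp x y.
Proof. by rewrite dotpC dotpZl dotpC. Qed.

Lemma adiv_le (a t : R) (b : \bar R) : 0 < t -> (0 <= b)%E ->
  (adiv a b <= t%:E)%E = (a%:E <= t%:E * b)%E.
Proof.
move=> t_gt0; case: b => [r| |] //= r_ge0; last first.
  by rewrite gt0_muley ?lte_fin // leey lee_fin ltW.
rewrite lee_fin in r_ge0; rewrite -EFinM !lee_fin.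
case: eqP => [->|/eqP r_neq0]; last by rewrite lee_fin ler_pdivrMr // lt_def r_neq0.
rewrite mulr0; case: ltP => _; last by rewrite lee_fin ltW.
by apply/negbTE; rewrite -ltNge ltey.
Qed.

Lemma polarfun_le phi x (t : R) : 0 < t -> (forall y, 0 <= phi y)%E ->
  (polarfun phi x <= t%:E)%E <-> forall y, ((dotp x y - 1)%:E <= t%:E * phi y)%E.
Proof.
move=> t_gt0 phi_ge0; split => [phix_le y | H].
  by rewrite -adiv_le //; apply: le_trans phix_le; apply: ereal_sup_ubound; exists y.
by apply: ge_ereal_sup => _ [y _ <-]; rewrite adiv_le.
Qed.

Lemma econvex_scale_le phi (l : R) z : econvex phi -> phi 0 = 0%E ->
  0 < l -> l < 1 -> (phi (l *: z) <= l%:E * phi z)%E.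
Proof.
move=> cvx phi00 l_gt0 l_lt1.
by have := cvx z 0 l l_gt0 l_lt1; rewrite scaler0 addr0 phi00 mule0 adde0.
Qed.

Lemma polar_sublevel_dotp_le phi (s r : R) y z :
  econvex phi -> phi 0 = 0%E -> 0 < s ->
  polarset (sublevel phi s) y -> phi z = r%:E -> dotp z y <= Num.max 1 (r / s).
Proof.
move=> cvx phi00 s_gt0 Ky phiz; rewrite le_max.
have [r_le_s|s_lt_r] := leP r s.
  by rewrite Ky // /sublevel /= phiz lee_fin.
have r_gt0 : 0 < r by apply: lt_trans s_lt_r.
have l_gt0 : 0 < s / r by rewrite divr_gt0.
have l_lt1 : s / r < 1 by rewrite ltr_pdivrMr // mul1r.
have : dotp (s / r *: z) y <= 1.
  apply: Ky; rewrite /sublevel /=.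
  apply: le_trans (econvex_scale_le z cvx phi00 l_gt0 l_lt1) _.
  by rewrite phiz -EFinM lee_fin divfK ?gt_eqF.
by rewrite dotpZl -ler_pdivlMl // invf_div mulr1 => ->; rewrite orbT.
Qed.

Lemma polar_sublevel_sub phi (t : R) :
  (forall x, 0 <= phi x)%E -> econvex phi -> phi 0 = 0%E -> 0 < t ->
  polarset (sublevel phi t^-1) `<=` sublevel (polarfun phi) t.
Proof.
move=> phi_ge0 cvx phi00 t_gt0 y Ky; apply/polarfun_le => // z.
move: (phi_ge0 z); case phiz: (phi z) => [r| |] // r_ge0; last first.
  by rewrite gt0_muley ?lte_fin // leey.
rewrite lee_fin in r_ge0; rewrite -EFinM lee_fin dotpC.
have := polar_sublevel_dotp_le cvx phi00 _ Ky phiz; rewrite invrK invr_gt0.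
move=> /(_ t_gt0); have := mulr_ge0 r_ge0 (ltW t_gt0).
by rewrite le_max => ? /orP[]; lra.
Qed.

Lemma sublevel_polarfun_sub phi (t : R) :
  (forall x, 0 <= phi x)%E -> 0 < t ->
  sublevel (polarfun phi) t `<=` dilate 2 (polarset (sublevel phi t^-1)).
Proof.
move=> phi_ge0 t_gt0 x /(polarfun_le _ t_gt0 phi_ge0) Hx.
exists (2^-1 *: x); last by rewrite scalerA mulfV ?scale1r.
move=> z phiz_le; rewrite dotpZr dotpC.
have : ((dotp x z - 1)%:E <= 1)%E.
  apply: le_trans (Hx z) _; apply: le_trans (lee_wpmul2l _ phiz_le) _.
    by rewrite lee_fin ltW.
  by rewrite -EFinM mulfV ?gt_eqF.
rewrite lee_fin; lra.
Qed.

End Polarity.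

Theorem proposition2p9 (R : realType) (n : nat) (phi : 'rV[R]_n -> \bar R) :
  (forall x, (0 <= phi x)%E) ->
  lower_semicontinuous phi ->
  econvex phi ->
  phi 0 = 0%E ->
  forall t : R, 0 < t ->
    polarset (sublevel phi t^-1) `<=` sublevel (polarfun phi) t /\
    sublevel (polarfun phi) t `<=` dilate 2 (polarset (sublevel phi t^-1)).
Proof.
move=> phi_ge0 _ cvx phi00 t t_gt0; split.
- exact: polar_sublevel_sub.
- exact: sublevel_polarfun_sub.
Qed.
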